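(* Let $A$ be a sequence algebra and $X$ an essential homogeneous normed $A$-module with completion $\overline X$. Then for every $x\in\overline X$ there exist $\bar x\in\overline X$ and real numbers $\lambda_n\ge1$ with $\lambda_n\to\infty$ such that $\bar x_n=\lambda_nx_n$ for all $n\in\mathbb N$.
   Context: Modules are contractive ($\|a\cdot x\|\le\|a\|\|x\|$). A sequence algebra is a normed algebra of complex sequences with coordinatewise operations containing $c_{00}$ as a dense subalgebra, with $\|\mathbf p^n\|=1$, where $\mathbf p^n$ has $1$ in place $n$ and $0$ elsewhere. For $x$ in a module, $x_n:=\mathbf p^n\cdot x$. $X$ is essential if the closed linear span of $\{a\cdot x\}$ is $X$; homogeneous if $\|x_n\|\le\|y_n\|$ for all $n$ implies $\|x\|\le\|y\|$. *)

From Stdlib Require Import Reals.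
Open Scope R_scope.

Record Cx := mkC { re : R ; im : R }.
Definition C0 : Cx := mkC 0 0.
Definition C1 : Cx := mkC 1 0.
Definition RtoC (r : R) : Cx := mkC r 0.
Definition Cadd (z w : Cx) : Cx := mkC (re z + re w) (im z + im w).
Definition Cmul (z w : Cx) : Cx :=
  mkC (re z * re w - im z * im w) (re z * im w + im z * re w).
Definition Copp (z : Cx) : Cx := mkC (- re z) (- im z).
Definition Cabs (z : Cx) : R := sqrt (re z * re z + im z * im z).

Record NormedSpace := {
  ns_car :> Type;
  vzero : ns_car;
  vadd : ns_car -> ns_car -> ns_car;
  vopp : ns_car -> ns_car;
  vscal : Cx -> ns_car -> ns_car;
  vnorm : ns_car -> R;
  vadd_assoc : forall x y z, vadd x (vadd y z) = vadd (vadd x y) z;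
  vadd_comm : forall x y, vadd x y = vadd y x;
  vadd_0 : forall x, vadd vzero x = x;
  vadd_opp : forall x, vadd x (vopp x) = vzero;
  vscal_1 : forall x, vscal C1 x = x;
  vscal_mul : forall c d x, vscal c (vscal d x) = vscal (Cmul c d) x;
  vscal_addl : forall c d x, vscal (Cadd c d) x = vadd (vscal c x) (vscal d x);
  vscal_addr : forall c x y, vscal c (vadd x y) = vadd (vscal c x) (vscal c y);
  vnorm_eq0 : forall x, vnorm x = 0 -> x = vzero;
  vnorm_triangle : forall x y, vnorm (vadd x y) <= vnorm x + vnorm y;
  vnorm_scal : forall c x, vnorm (vscal c x) = Cabs c * vnorm x
}.
Arguments vzero {n}.
Arguments vadd {n}.
Arguments vopp {n}.
Arguments vscal {n}.
Arguments vnorm {n}.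

Definition vsub {X : NormedSpace} (x y : X) : X := vadd x (vopp y).

Definition is_complete (X : NormedSpace) : Prop :=
  forall u : nat -> X,
    (forall eps, 0 < eps -> exists N, forall m n, (N <= m)%nat -> (N <= n)%nat ->
        vnorm (vsub (u m) (u n)) < eps) ->
    exists l : X, forall eps, 0 < eps -> exists N, forall n, (N <= n)%nat ->
        vnorm (vsub (u n) l) < eps.

Inductive in_span {X : NormedSpace} (S : X -> Prop) : X -> Prop :=
| span_zero : in_span S vzero
| span_step : forall c v w, S v -> in_span S w -> in_span S (vadd (vscal c v) w).

Definition in_closure {X : NormedSpace} (S : X -> Prop) (x : X) : Prop :=
  forall eps, 0 < eps -> exists y, S y /\ vnorm (vsub x y) < eps.

Definition cseq := nat -> Cx.
Definition szero : cseq := fun _ => C0.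
Definition sadd (a b : cseq) : cseq := fun n => Cadd (a n) (b n).
Definition sopp (a : cseq) : cseq := fun n => Copp (a n).
Definition smul (a b : cseq) : cseq := fun n => Cmul (a n) (b n).
Definition sscal (c : Cx) (a : cseq) : cseq := fun n => Cmul c (a n).
Definition pseq (n : nat) : cseq := fun m => if Nat.eqb m n then C1 else C0.
Definition finsupp (a : cseq) : Prop := exists N, forall m, (N <= m)%nat -> a m = C0.

Definition is_seq_algebra (Aset : cseq -> Prop) (Anorm : cseq -> R) : Prop :=
  Aset szero /\
  (forall a b, Aset a -> Aset b -> Aset (sadd a b)) /\
  (forall c a, Aset a -> Aset (sscal c a)) /\
  (forall a b, Aset a -> Aset b -> Aset (smul a b)) /\
  (forall a, Aset a -> Anorm a = 0 -> forall n, a n = C0) /\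
  (forall a b, Aset a -> Aset b -> Anorm (sadd a b) <= Anorm a + Anorm b) /\
  (forall c a, Aset a -> Anorm (sscal c a) = Cabs c * Anorm a) /\
  (forall a b, Aset a -> Aset b -> Anorm (smul a b) <= Anorm a * Anorm b) /\
  (forall a, finsupp a -> Aset a) /\
  (forall a, Aset a -> forall eps, 0 < eps ->
      exists b, finsupp b /\ Anorm (sadd a (sopp b)) < eps) /\
  (forall n, Anorm (pseq n) = 1).

(** A contractive (left) normed A-module structure on X given by [act]
    (only its values on elements of Aset matter). *)
Definition is_module (Aset : cseq -> Prop) (Anorm : cseq -> R)
    (X : NormedSpace) (act : cseq -> X -> X) : Prop :=
  (forall a x y, Aset a -> act a (vadd x y) = vadd (act a x) (act a y)) /\
  (forall a c x, Aset a -> act a (vscal c x) = vscal c (act a x)) /\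
  (forall a b x, Aset a -> Aset b -> act (sadd a b) x = vadd (act a x) (act b x)) /\
  (forall c a x, Aset a -> act (sscal c a) x = vscal c (act a x)) /\
  (forall a b x, Aset a -> Aset b -> act a (act b x) = act (smul a b) x) /\
  (forall a x, Aset a -> vnorm (act a x) <= Anorm a * vnorm x).

Definition is_essential (Aset : cseq -> Prop) (X : NormedSpace)
    (act : cseq -> X -> X) : Prop :=
  forall x : X,
    in_closure (in_span (fun v => exists a y, Aset a /\ v = act a y)) x.

Definition is_homogeneous (X : NormedSpace) (act : cseq -> X -> X) : Prop :=
  forall x y : X, (forall n, vnorm (act (pseq n) x) <= vnorm (act (pseq n) y)) ->
    vnorm x <= vnorm y.

Definition is_module_completion (Aset : cseq -> Prop) (Anorm : cseq -> R)
    (X : NormedSpace) (act : cseq -> X -> X)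
    (Y : NormedSpace) (actY : cseq -> Y -> Y) (j : X -> Y) : Prop :=
  is_complete Y /\
  is_module Aset Anorm Y actY /\
  (forall x y, j (vadd x y) = vadd (j x) (j y)) /\
  (forall c x, j (vscal c x) = vscal c (j x)) /\
  (forall x, vnorm (j x) = vnorm x) /\
  (forall y : Y, in_closure (fun z => exists x, z = j x) y) /\
  (forall a x, Aset a -> j (act a x) = actY a (j x)).

(* Let Q_N x = x - P_N x ([tail_part]), where P_N ([indic_lt N]) is the indicator of
   {0, ..., N-1}. Homogeneity gives ||Q_N x|| <= ||x||, and ||Q_N x|| -> 0 because,
   by essentiality, x is a limit of elements whose coordinates vanish eventually;
   both facts pass to the completion by density. Choosing 0 = N_0 < N_1 < N_2 < ...
   with ||Q_(N_k) x|| < 2^-k, the series sum_k Q_(N_k) x converges, and its n-th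
   coordinate is lambda_n x_n with lambda_n = #{k : N_k <= n}, which is >= 1 and
   tends to infinity. *)

From Stdlib Require Import Reals Lra Lia FunctionalExtensionality ClassicalEpsilon.
Open Scope R_scope.

Ltac cx_ring := unfold C0, C1, RtoC, Cadd, Cmul, Copp; simpl; f_equal; ring.

Lemma Cabs_C0 : Cabs C0 = 0.
Proof. unfold Cabs, C0; simpl. rewrite Rmult_0_l, Rplus_0_l; apply sqrt_0. Qed.

Lemma Cabs_Copp_C1 : Cabs (Copp C1) = 1.
Proof.
  unfold Cabs, Copp, C1; simpl.
  replace (- (1) * - (1) + - 0 * - 0) with 1 by ring; apply sqrt_1.
Qed.

Lemma Cabs_nonneg c : 0 <= Cabs c.
Proof. apply sqrt_pos. Qed.

Section NormedSpaceFacts.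
Variable Z : NormedSpace.
Implicit Types x y z w : Z.

Lemma vadd_0_r x : vadd x vzero = x.
Proof. rewrite vadd_comm; apply vadd_0. Qed.

Lemma vscal_C0 x : vscal C0 x = vzero.
Proof.
  assert (Hdup : vscal C0 x = vadd (vscal C0 x) (vscal C0 x)).
  { rewrite <- vscal_addl; f_equal; cx_ring. }
  set (s := vscal C0 x) in *.
  transitivity (vadd s (vadd s (vopp s))).
  { rewrite vadd_opp, vadd_0_r; reflexivity. }
  rewrite vadd_assoc, <- Hdup; apply vadd_opp.
Qed.

Lemma vopp_unique x y : vadd x y = vzero -> y = vopp x.
Proof.
  intros H. rewrite <- (vadd_0 _ (vopp x)), <- H.
  rewrite (vadd_comm _ x y), <- vadd_assoc, vadd_opp, vadd_0_r. reflexivity.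
Qed.

Lemma vopp_scal x : vopp x = vscal (Copp C1) x.
Proof.
  symmetry; apply vopp_unique.
  rewrite <- (vscal_1 _ x) at 1. rewrite <- vscal_addl.
  replace (Cadd C1 (Copp C1)) with C0 by cx_ring. apply vscal_C0.
Qed.

Lemma vnorm_0 : vnorm (@vzero Z) = 0.
Proof. rewrite <- (vscal_C0 vzero), vnorm_scal, Cabs_C0; ring. Qed.

Lemma vscal_0_r c : vscal c (@vzero Z) = vzero.
Proof. apply vnorm_eq0. rewrite vnorm_scal, vnorm_0; ring. Qed.

Lemma vnorm_opp x : vnorm (vopp x) = vnorm x.
Proof. rewrite vopp_scal, vnorm_scal, Cabs_Copp_C1; ring. Qed.

Lemma vnorm_nonneg x : 0 <= vnorm x.
Proof.
  pose proof (vnorm_triangle _ x (vopp x)) as H.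
  rewrite vadd_opp, vnorm_0, vnorm_opp in H. lra.
Qed.

Lemma vopp_involutive x : vopp (vopp x) = x.
Proof. symmetry; apply vopp_unique. rewrite vadd_comm; apply vadd_opp. Qed.

Lemma vopp_vadd x y : vopp (vadd x y) = vadd (vopp x) (vopp y).
Proof. rewrite !vopp_scal, vscal_addr; reflexivity. Qed.

Lemma vadd_vadd_swap x y z w : vadd (vadd x y) (vadd z w) = vadd (vadd x z) (vadd y w).
Proof.
  rewrite <- !vadd_assoc. f_equal.
  rewrite !vadd_assoc. f_equal. apply vadd_comm.
Qed.

Lemma vsub_diag x : vsub x x = vzero.
Proof. apply vadd_opp. Qed.

Lemma vsub_0_r x : vsub x vzero = x.
Proof.
  unfold vsub. replace (vopp (@vzero Z)) with (@vzero Z) by (apply vopp_unique, vadd_0).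
  apply vadd_0_r.
Qed.

Lemma vsub_add_cancel x y : vadd y (vsub x y) = x.
Proof.
  unfold vsub. rewrite vadd_comm, <- vadd_assoc, (vadd_comm _ (vopp y)), vadd_opp.
  apply vadd_0_r.
Qed.

Lemma vsub_eq0 x y : vsub x y = vzero -> x = y.
Proof. intros H. rewrite <- (vsub_add_cancel x y), H. apply vadd_0_r. Qed.

Lemma vsub_vadd x y z w : vsub (vadd x y) (vadd z w) = vadd (vsub x z) (vsub y w).
Proof. unfold vsub; rewrite vopp_vadd; apply vadd_vadd_swap. Qed.

Lemma vsub_vsub x y z w : vsub (vsub x y) (vsub z w) = vsub (vsub x z) (vsub y w).
Proof. unfold vsub. rewrite !vopp_vadd, !vopp_involutive. apply vadd_vadd_swap. Qed.

Lemma vsub_vadd_l x y z : vsub (vadd x y) z = vadd x (vsub y z).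
Proof. unfold vsub; rewrite vadd_assoc; reflexivity. Qed.

Lemma vscal_vsub c x y : vscal c (vsub x y) = vsub (vscal c x) (vscal c y).
Proof.
  unfold vsub; rewrite vscal_addr, !vopp_scal, !vscal_mul.
  replace (Cmul c (Copp C1)) with (Cmul (Copp C1) c) by (destruct c; cx_ring). reflexivity.
Qed.

Lemma vnorm_sub_sym x y : vnorm (vsub x y) = vnorm (vsub y x).
Proof.
  rewrite <- vnorm_opp. f_equal.
  unfold vsub; rewrite vopp_vadd, vopp_involutive, vadd_comm; reflexivity.
Qed.

Lemma vnorm_sub_triangle x y z : vnorm (vsub x z) <= vnorm (vsub x y) + vnorm (vsub y z).
Proof.
  replace (vsub x z) with (vadd (vsub x y) (vsub y z)); [apply vnorm_triangle|].
  unfold vsub. rewrite (vadd_comm _ y), vadd_vadd_swap, (vadd_comm _ (vopp y)), vadd_opp.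
  rewrite vadd_0_r; reflexivity.
Qed.

Lemma vnorm_le_sub x y : vnorm x <= vnorm y + vnorm (vsub x y).
Proof. rewrite <- (vsub_add_cancel x y) at 1. apply vnorm_triangle. Qed.

Lemma vnorm_sub_le x y : vnorm (vsub x y) <= vnorm x + vnorm y.
Proof. unfold vsub; rewrite <- (vnorm_opp y); apply vnorm_triangle. Qed.

Lemma vnorm_sub_vadd_vscal c v v' w w' :
  vnorm (vsub (vadd (vscal c v) w) (vadd (vscal c v') w'))
  <= Cabs c * vnorm (vsub v v') + vnorm (vsub w w').
Proof. rewrite vsub_vadd, <- vscal_vsub, <- vnorm_scal. apply vnorm_triangle. Qed.

End NormedSpaceFacts.

Definition indic_lt (N : nat) : cseq := fun m => if Nat.ltb m N then C1 else C0.

Lemma smul_pseq_indic_lt n N :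
  smul (pseq n) (indic_lt N) = if Nat.ltb n N then pseq n else szero.
Proof.
  destruct (Nat.ltb n N) eqn:E; extensionality m; unfold smul, pseq, indic_lt, szero;
  destruct (Nat.eqb m n) eqn:E2; try cx_ring;
  apply Nat.eqb_eq in E2; subst; rewrite E; cx_ring.
Qed.

Lemma smul_pseq_vanishing n b M :
  (forall m, (M <= m)%nat -> b m = C0) -> (M <= n)%nat -> smul (pseq n) b = szero.
Proof.
  intros Hb Hn; extensionality m; unfold smul, pseq, szero.
  destruct (Nat.eqb m n) eqn:E.
  - apply Nat.eqb_eq in E; subst; rewrite Hb by lia; cx_ring.
  - destruct (b m); cx_ring.
Qed.

Lemma sscal_C0_szero : sscal C0 szero = szero.
Proof. extensionality m; unfold sscal, szero; cx_ring. Qed.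

Lemma sopp_sscal b : sopp b = sscal (Copp C1) b.
Proof. extensionality m; unfold sopp, sscal; destruct (b m); cx_ring. Qed.

Lemma finsupp_pseq n : finsupp (pseq n).
Proof.
  exists (S n); intros m Hm; unfold pseq.
  replace (Nat.eqb m n) with false; [reflexivity|].
  symmetry; apply Nat.eqb_neq; lia.
Qed.

Lemma finsupp_indic_lt N : finsupp (indic_lt N).
Proof.
  exists N; intros m Hm; unfold indic_lt.
  replace (Nat.ltb m N) with false; [reflexivity|].
  symmetry; apply Nat.ltb_ge; lia.
Qed.

Section SeqAlgebra.
Variables (Aset : cseq -> Prop) (Anorm : cseq -> R).
Hypothesis HA : is_seq_algebra Aset Anorm.

Lemma seqalg_szero : Aset szero.
Proof. destruct HA as (h & _). exact h. Qed.

Lemma seqalg_sadd a b : Aset a -> Aset b -> Aset (sadd a b).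
Proof. destruct HA as (_ & h & _). apply h. Qed.

Lemma seqalg_sscal c a : Aset a -> Aset (sscal c a).
Proof. destruct HA as (_ & _ & h & _). apply h. Qed.

Lemma seqalg_finsupp a : finsupp a -> Aset a.
Proof. destruct HA as (_ & _ & _ & _ & _ & _ & _ & _ & h & _). apply h. Qed.

Lemma seqalg_finsupp_dense a : Aset a -> forall eps, 0 < eps ->
  exists b, finsupp b /\ Anorm (sadd a (sopp b)) < eps.
Proof. destruct HA as (_ & _ & _ & _ & _ & _ & _ & _ & _ & h & _). apply h. Qed.

Lemma seqalg_norm_pseq n : Anorm (pseq n) = 1.
Proof. destruct HA as (_ & _ & _ & _ & _ & _ & _ & _ & _ & _ & h). apply h. Qed.

Lemma seqalg_pseq n : Aset (pseq n).
Proof. apply seqalg_finsupp, finsupp_pseq. Qed.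

Lemma seqalg_indic_lt N : Aset (indic_lt N).
Proof. apply seqalg_finsupp, finsupp_indic_lt. Qed.

Lemma seqalg_sopp a : Aset a -> Aset (sopp a).
Proof. rewrite sopp_sscal; apply seqalg_sscal. Qed.

End SeqAlgebra.

Definition tail_part {Z : NormedSpace} (actZ : cseq -> Z -> Z) (N : nat) (z : Z) : Z :=
  vsub z (actZ (indic_lt N) z).

Definition coords_vanish_from {Z : NormedSpace} (actZ : cseq -> Z -> Z) (M : nat) (z : Z) :=
  forall n, (M <= n)%nat -> actZ (pseq n) z = vzero.

Definition tails_vanish {Z : NormedSpace} (actZ : cseq -> Z -> Z) (z : Z) :=
  forall eps, 0 < eps ->
    exists N0, forall N, (N0 <= N)%nat -> vnorm (tail_part actZ N z) < eps.

Section Module.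
Context {Aset : cseq -> Prop} {Anorm : cseq -> R} {Z : NormedSpace} {actZ : cseq -> Z -> Z}.
Hypothesis HA : is_seq_algebra Aset Anorm.
Hypothesis HM : is_module Aset Anorm Z actZ.

Lemma act_vadd a x y : Aset a -> actZ a (vadd x y) = vadd (actZ a x) (actZ a y).
Proof. destruct HM as (h & _). apply h. Qed.

Lemma act_vscal a c x : Aset a -> actZ a (vscal c x) = vscal c (actZ a x).
Proof. destruct HM as (_ & h & _). apply h. Qed.

Lemma act_sadd a b x : Aset a -> Aset b -> actZ (sadd a b) x = vadd (actZ a x) (actZ b x).
Proof. destruct HM as (_ & _ & h & _). apply h. Qed.

Lemma act_sscal c a x : Aset a -> actZ (sscal c a) x = vscal c (actZ a x).
Proof. destruct HM as (_ & _ & _ & h & _). apply h. Qed.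

Lemma act_smul a b x : Aset a -> Aset b -> actZ a (actZ b x) = actZ (smul a b) x.
Proof. destruct HM as (_ & _ & _ & _ & h & _). apply h. Qed.

Lemma act_norm_le a x : Aset a -> vnorm (actZ a x) <= Anorm a * vnorm x.
Proof. destruct HM as (_ & _ & _ & _ & _ & h). apply h. Qed.

Lemma act_vzero a : Aset a -> actZ a vzero = vzero.
Proof.
  intros Ha. rewrite <- (vscal_C0 _ vzero) at 1.
  rewrite act_vscal by exact Ha. apply vscal_C0.
Qed.

Lemma act_vsub a x y : Aset a -> actZ a (vsub x y) = vsub (actZ a x) (actZ a y).
Proof.
  intros Ha. unfold vsub.
  rewrite act_vadd, !vopp_scal, act_vscal by exact Ha. reflexivity.
Qed.

Lemma act_szero x : actZ szero x = vzero.
Proof. rewrite <- sscal_C0_szero, act_sscal by apply (seqalg_szero _ _ HA). apply vscal_C0. Qed.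

Lemma act_sopp a x : Aset a -> actZ (sopp a) x = vopp (actZ a x).
Proof. intros Ha. rewrite sopp_sscal, act_sscal, vopp_scal by exact Ha. reflexivity. Qed.

Lemma coord_norm_le n z : vnorm (actZ (pseq n) z) <= vnorm z.
Proof.
  eapply Rle_trans; [apply act_norm_le, (seqalg_pseq _ _ HA)|].
  rewrite (seqalg_norm_pseq _ _ HA); lra.
Qed.

Lemma coord_indic_lt n N z :
  actZ (pseq n) (actZ (indic_lt N) z) = if Nat.ltb n N then actZ (pseq n) z else vzero.
Proof.
  rewrite act_smul by (apply (seqalg_pseq _ _ HA) || apply (seqalg_indic_lt _ _ HA)).
  rewrite smul_pseq_indic_lt.
  destruct (Nat.ltb n N); [reflexivity | apply act_szero].
Qed.

Lemma coord_tail_part n N z :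
  actZ (pseq n) (tail_part actZ N z) = if Nat.ltb n N then vzero else actZ (pseq n) z.
Proof.
  unfold tail_part. rewrite act_vsub, coord_indic_lt by apply (seqalg_pseq _ _ HA).
  destruct (Nat.ltb n N); [apply vsub_diag | apply vsub_0_r].
Qed.

Lemma tail_part_vsub N x y :
  tail_part actZ N (vsub x y) = vsub (tail_part actZ N x) (tail_part actZ N y).
Proof. unfold tail_part. rewrite act_vsub by apply (seqalg_indic_lt _ _ HA). apply vsub_vsub. Qed.

Lemma tail_part_norm_le N z :
  vnorm (tail_part actZ N z) <= (1 + Rabs (Anorm (indic_lt N))) * vnorm z.
Proof.
  unfold tail_part. eapply Rle_trans; [apply vnorm_sub_le|].
  pose proof (act_norm_le (indic_lt N) z (seqalg_indic_lt _ _ HA N)).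
  pose proof (Rmult_le_compat_r _ _ _ (vnorm_nonneg _ z) (Rle_abs (Anorm (indic_lt N)))).
  lra.
Qed.

Lemma coords_vanish_act_finsupp b M y :
  (forall m, (M <= m)%nat -> b m = C0) -> Aset b -> coords_vanish_from actZ M (actZ b y).
Proof.
  intros Hb HbA n Hn.
  rewrite act_smul, (smul_pseq_vanishing n b M Hb Hn) by (auto; apply (seqalg_pseq _ _ HA)).
  apply act_szero.
Qed.

Lemma coords_vanish_combine c M M' v w :
  coords_vanish_from actZ M v -> coords_vanish_from actZ M' w ->
  coords_vanish_from actZ (Nat.max M M') (vadd (vscal c v) w).
Proof.
  intros Hv Hw n Hn.
  rewrite act_vadd, act_vscal, Hv, Hw, vscal_0_r, vadd_0_r by (try apply (seqalg_pseq _ _ HA); lia).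
  reflexivity.
Qed.

Lemma act_finsupp_approx a y : Aset a -> forall eps, 0 < eps ->
  exists b, finsupp b /\ vnorm (vsub (actZ a y) (actZ b y)) < eps.
Proof.
  intros Ha eps He.
  set (d := eps / (vnorm y + 1)).
  assert (Hd : 0 < d) by (apply Rdiv_lt_0_compat; [|pose proof (vnorm_nonneg _ y)]; lra).
  destruct (seqalg_finsupp_dense _ _ HA a Ha d Hd) as (b & Hb & Hab).
  pose proof (seqalg_sopp _ _ HA b (seqalg_finsupp _ _ HA b Hb)) as Hopp.
  exists b; split; [exact Hb|].
  unfold vsub. rewrite <- act_sopp, <- act_sadd
    by first [assumption | apply (seqalg_finsupp _ _ HA); assumption].
  eapply Rle_lt_trans; [apply act_norm_le, (seqalg_sadd _ _ HA); assumption|].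
  pose proof (vnorm_nonneg _ y).
  apply Rle_lt_trans with (d * vnorm y); [apply Rmult_le_compat_r; lra|].
  replace eps with (d * (vnorm y + 1)) by (unfold d; field; lra).
  apply Rmult_lt_compat_l; lra.
Qed.

Lemma coord_of_limit (s : nat -> Z) (l : Z) n K0 c :
  (forall eps, 0 < eps -> exists N, forall K, (N <= K)%nat -> vnorm (vsub (s K) l) < eps) ->
  (forall K, (K0 <= K)%nat -> actZ (pseq n) (s K) = c) ->
  actZ (pseq n) l = c.
Proof.
  intros Hl Hc. apply eq_sym, vsub_eq0, vnorm_eq0.
  apply Rle_antisym; [|apply vnorm_nonneg].
  apply Rle_plus_epsilon. intros eps He. rewrite Rplus_0_l.
  destruct (Hl eps He) as [N HN].
  rewrite <- (Hc (Nat.max N K0)) by lia.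
  rewrite <- act_vsub by apply (seqalg_pseq _ _ HA).
  eapply Rle_trans; [apply coord_norm_le|]. left; apply HN; lia.
Qed.

Lemma span_in_closure_coords_vanish v :
  in_span (fun u => exists a y, Aset a /\ u = actZ a y) v ->
  in_closure (fun w => exists M, coords_vanish_from actZ M w) v.
Proof.
  induction 1 as [| c v w Hv _ IH].
  - intros eps He; exists vzero; split.
    + exists O; intros n _; apply act_vzero, (seqalg_pseq _ _ HA).
    + rewrite vsub_diag, vnorm_0; exact He.
  - intros eps He. destruct Hv as (a & y & Ha & ->).
    destruct (IH (eps / 2)) as (w' & (Mw & Hw') & Hww'); [lra|].
    set (d := eps / (2 * (Cabs c + 1))).
    assert (Hd : 0 < d) by (apply Rdiv_lt_0_compat; pose proof (Cabs_nonneg c); lra).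
    destruct (act_finsupp_approx a y Ha d Hd) as (b & Hb & Hab).
    pose proof Hb as [Mb HMb].
    exists (vadd (vscal c (actZ b y)) w'). split.
    + exists (Nat.max Mb Mw). apply coords_vanish_combine; [|exact Hw'].
      apply (coords_vanish_act_finsupp _ _ _ HMb), (seqalg_finsupp _ _ HA), Hb.
    + eapply Rle_lt_trans; [apply vnorm_sub_vadd_vscal|].
      assert (Hcd : Cabs c * vnorm (vsub (actZ a y) (actZ b y)) <= Cabs c * d)
        by (apply Rmult_le_compat_l; [apply Cabs_nonneg | lra]).
      assert (Cabs c * d + d = eps / 2) by (unfold d; field; pose proof (Cabs_nonneg c); lra).
      lra.
Qed.

End Module.

Section Homogeneous.
Context {Aset : cseq -> Prop} {Anorm : cseq -> R} {X : NormedSpace} {act : cseq -> X -> X}.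
Hypothesis HA : is_seq_algebra Aset Anorm.
Hypothesis HM : is_module Aset Anorm X act.
Hypothesis HH : is_homogeneous X act.

Lemma tail_part_contract N x : vnorm (tail_part act N x) <= vnorm x.
Proof.
  apply HH. intros n. rewrite (coord_tail_part HA HM).
  destruct (Nat.ltb n N); [rewrite vnorm_0; apply vnorm_nonneg | apply Rle_refl].
Qed.

Lemma tail_part_le_dist N M x w :
  coords_vanish_from act M w -> (M <= N)%nat -> vnorm (tail_part act N x) <= vnorm (vsub x w).
Proof.
  intros Hw HMN. apply HH. intros n. rewrite (coord_tail_part HA HM).
  destruct (Nat.ltb n N) eqn:E; [rewrite vnorm_0; apply vnorm_nonneg|].
  apply Nat.ltb_ge in E.
  rewrite (act_vsub HM), (Hw n), vsub_0_r by (apply (seqalg_pseq _ _ HA) || lia).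
  apply Rle_refl.
Qed.

Hypothesis HE : is_essential Aset X act.

Lemma tails_vanish_essential x : tails_vanish act x.
Proof.
  intros eps He.
  destruct (HE x (eps / 2)) as (v & Hv & Hxv); [lra|].
  destruct (span_in_closure_coords_vanish HA HM v Hv (eps / 2)) as (w & (M & HMw) & Hvw); [lra|].
  exists M. intros N HN.
  eapply Rle_lt_trans; [apply (tail_part_le_dist N M x w HMw HN)|].
  pose proof (vnorm_sub_triangle _ x v w). lra.
Qed.

End Homogeneous.

Section Completion.
Context {Aset : cseq -> Prop} {Anorm : cseq -> R} {X : NormedSpace} {act : cseq -> X -> X}
  {Y : NormedSpace} {actY : cseq -> Y -> Y} {j : X -> Y}.
Hypothesis HA : is_seq_algebra Aset Anorm.
Hypothesis HM : is_module Aset Anorm X act.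
Hypothesis HH : is_homogeneous X act.
Hypothesis HC : is_module_completion Aset Anorm X act Y actY j.

Lemma completion_module : is_module Aset Anorm Y actY.
Proof. destruct HC as (_ & h & _). exact h. Qed.

Lemma completion_norm x : vnorm (j x) = vnorm x.
Proof. destruct HC as (_ & _ & _ & _ & h & _). apply h. Qed.

Lemma completion_dense z : in_closure (fun u => exists x, u = j x) z.
Proof. destruct HC as (_ & _ & _ & _ & _ & h & _). apply h. Qed.

Lemma completion_vsub x y : j (vsub x y) = vsub (j x) (j y).
Proof.
  destruct HC as (_ & _ & jadd & jscal & _).
  unfold vsub. rewrite jadd, !vopp_scal, jscal. reflexivity.
Qed.

Lemma completion_tail_part N x : j (tail_part act N x) = tail_part actY N (j x).
Proof.
  destruct HC as (_ & _ & _ & _ & _ & _ & jact).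
  unfold tail_part. rewrite completion_vsub, jact by apply (seqalg_indic_lt _ _ HA).
  reflexivity.
Qed.

Lemma completion_tail_part_split N z x :
  vnorm (tail_part actY N z)
  <= vnorm (tail_part act N x) + vnorm (tail_part actY N (vsub z (j x))).
Proof.
  eapply Rle_trans; [apply (vnorm_le_sub _ _ (tail_part actY N (j x)))|].
  rewrite <- (tail_part_vsub HA completion_module), <- completion_tail_part, completion_norm.
  apply Rle_refl.
Qed.

(* The operator norm of [tail_part actY N] is at most [1 + |Anorm (indic_lt N)|] a priori,
   so approximating [z] by [j x] transfers the contraction from [X]. *)
Lemma completion_tail_part_contract N z : vnorm (tail_part actY N z) <= vnorm z.
Proof.
  set (K := Rabs (Anorm (indic_lt N))).
  assert (HK : 0 <= K) by apply Rabs_pos.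
  apply Rle_plus_epsilon. intros eps He.
  set (d := eps / (2 + K)).
  assert (Hd : 0 < d) by (apply Rdiv_lt_0_compat; lra).
  destruct (completion_dense z d Hd) as (u & (x & ->) & Hzx).
  pose proof (completion_tail_part_split N z x).
  pose proof (tail_part_norm_le HA completion_module N (vsub z (j x))) as Hop.
  fold K in Hop.
  pose proof (tail_part_contract HA HM HH N x).
  pose proof (vnorm_le_sub _ (j x) z) as Hjx.
  rewrite completion_norm, vnorm_sub_sym in Hjx.
  assert ((1 + K) * vnorm (vsub z (j x)) <= (1 + K) * d) by (apply Rmult_le_compat_l; lra).
  assert (Heps : (2 + K) * d = eps) by (unfold d; field; lra).
  lra.
Qed.

Lemma completion_tails_vanish (HE : is_essential Aset X act) z : tails_vanish actY z.
Proof.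
  intros eps He.
  destruct (completion_dense z (eps / 2)) as (u & (x & ->) & Hzx); [lra|].
  destruct (tails_vanish_essential HA HM HH HE x (eps / 2)) as (N0 & HN0); [lra|].
  exists N0. intros N HN.
  pose proof (completion_tail_part_split N z x). pose proof (HN0 N HN).
  pose proof (completion_tail_part_contract N (vsub z (j x))). lra.
Qed.

End Completion.

Fixpoint partial_sum {Z : NormedSpace} (T : nat -> Z) (K : nat) : Z :=
  match K with O => vzero | S K => vadd (T K) (partial_sum T K) end.

Section GeometricSeries.
Variables (Z : NormedSpace) (T : nat -> Z).
Hypothesis HT : forall k, (1 <= k)%nat -> vnorm (T k) < (1/2)^k.

Lemma partial_sum_diff_le n d : (1 <= n)%nat ->
  vnorm (vsub (partial_sum T (n + d)) (partial_sum T n)) <= 2 * (1/2)^n - 2 * (1/2)^(n + d).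
Proof.
  intros Hn. induction d as [|d IH].
  - rewrite Nat.add_0_r, vsub_diag, vnorm_0; lra.
  - rewrite Nat.add_succ_r; simpl partial_sum. rewrite vsub_vadd_l.
    eapply Rle_trans; [apply vnorm_triangle|].
    pose proof (HT (n + d)%nat ltac:(lia)). simpl. lra.
Qed.

Lemma partial_sum_cauchy eps : 0 < eps -> exists N, forall m n,
  (N <= m)%nat -> (N <= n)%nat -> vnorm (vsub (partial_sum T m) (partial_sum T n)) < eps.
Proof.
  intros He.
  destruct (pow_lt_1_zero (1/2)) with (y := eps / 2) as [N1 HN1];
    [rewrite Rabs_pos_eq; lra | lra |].
  assert (Hordered : forall a b, (Nat.max 1 N1 <= b)%nat -> (b <= a)%nat ->
     vnorm (vsub (partial_sum T a) (partial_sum T b)) < eps).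
  { intros a b Hb Hab. replace a with (b + (a - b))%nat by lia.
    pose proof (partial_sum_diff_le b (a - b) ltac:(lia)).
    pose proof (pow_lt (1/2) (b + (a - b)) ltac:(lra)).
    pose proof (HN1 b ltac:(lia)). pose proof (Rle_abs ((1/2)^b)). lra. }
  exists (Nat.max 1 N1). intros m n Hm Hn.
  destruct (Nat.le_ge_cases n m).
  - apply Hordered; assumption.
  - rewrite vnorm_sub_sym. apply Hordered; assumption.
Qed.

End GeometricSeries.

Lemma tail_modulus {Z : NormedSpace} (actZ : cseq -> Z -> Z) (z : Z) (e : nat -> R) :
  tails_vanish actZ z -> (forall k, 0 < e k) ->
  exists f : nat -> nat, forall k N, (f k <= N)%nat -> vnorm (tail_part actZ N z) < e k.
Proof.
  intros Hz He.
  exists (fun k => proj1_sig (constructive_indefinite_description _ (Hz (e k) (He k)))).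
  intros k. destruct (constructive_indefinite_description _ _) as [N0 HN0]. exact HN0.
Qed.

Fixpoint incr_majorant (f : nat -> nat) (k : nat) : nat :=
  match k with O => O | S k => Nat.max (S (incr_majorant f k)) (f (S k)) end.

Lemma incr_majorant_ge_id f k : (k <= incr_majorant f k)%nat.
Proof. induction k; [apply Nat.le_refl | cbn [incr_majorant]; lia]. Qed.

Lemma incr_majorant_mono f i k : (i <= k)%nat -> (incr_majorant f i <= incr_majorant f k)%nat.
Proof. induction 1; [apply Nat.le_refl | cbn [incr_majorant]; lia]. Qed.

Lemma incr_majorant_ge f k : (f (S k) <= incr_majorant f (S k))%nat.
Proof. cbn [incr_majorant]; lia. Qed.

Fixpoint count_le (g : nat -> nat) (n K : nat) : nat :=
  match K with O => O | S K => (if Nat.leb (g K) n then 1 else 0) + count_le g n K end.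

Lemma count_le_mono g n K K' : (K <= K')%nat -> (count_le g n K <= count_le g n K')%nat.
Proof. induction 1; [apply Nat.le_refl | simpl; lia]. Qed.

Lemma count_le_full g n K : (forall i, (i < K)%nat -> (g i <= n)%nat) -> count_le g n K = K.
Proof.
  induction K as [|K IH]; intros Hg; [reflexivity|]. simpl.
  rewrite IH by (intros i Hi; apply Hg; lia).
  replace (Nat.leb (g K) n) with true by (symmetry; apply Nat.leb_le, Hg; lia).
  reflexivity.
Qed.

(* Indices [K > n] do not count, since [n < K <= g K]. *)
Lemma count_le_stable g n K : (forall k, (k <= g k)%nat) -> (S n <= K)%nat ->
  count_le g n K = count_le g n (S n).
Proof.
  intros Hg HK. induction HK as [|K HK IH]; [reflexivity|].
  simpl count_le at 1. rewrite IH.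
  replace (Nat.leb (g K) n) with false by (symmetry; apply Nat.leb_gt; specialize (Hg K); lia).
  reflexivity.
Qed.

Lemma count_le_ge_1 g n : g O = O -> (1 <= count_le g n (S n))%nat.
Proof.
  intros Hg0. apply Nat.le_trans with (count_le g n 1); [|apply count_le_mono; lia].
  simpl. rewrite Hg0. reflexivity.
Qed.

Lemma count_le_diverges g :
  (forall i k, (i <= k)%nat -> (g i <= g k)%nat) -> (forall k, (k <= g k)%nat) ->
  cv_infty (fun n => INR (count_le g n (S n))).
Proof.
  intros Hmono Hg M.
  destruct (INR_archimed 1 M) as [k Hk]; [lra|]. rewrite Rmult_1_r in Hk.
  exists (g k). intros n Hn.
  assert (Hcount : (S k <= count_le g n (S n))%nat).
  { rewrite <- (count_le_full g n (S k)) by (intros i Hi; specialize (Hmono i k); lia).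
    apply count_le_mono. specialize (Hg k); lia. }
  apply le_INR in Hcount. rewrite S_INR in Hcount. lra.
Qed.

Section TailSeries.
Context {Aset : cseq -> Prop} {Anorm : cseq -> R} {Z : NormedSpace} {actZ : cseq -> Z -> Z}.
Hypothesis HA : is_seq_algebra Aset Anorm.
Hypothesis HM : is_module Aset Anorm Z actZ.

Lemma coord_partial_sum_tails g z n K :
  actZ (pseq n) (partial_sum (fun k => tail_part actZ (g k) z) K)
  = vscal (RtoC (INR (count_le g n K))) (actZ (pseq n) z).
Proof.
  induction K as [|K IH]; simpl partial_sum; simpl count_le.
  - rewrite (act_vzero HM) by apply (seqalg_pseq _ _ HA).
    replace (RtoC (INR 0)) with C0 by cx_ring. symmetry; apply vscal_C0.
  - rewrite (act_vadd HM), IH, (coord_tail_part HA HM) by apply (seqalg_pseq _ _ HA).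
    destruct (Nat.ltb n (g K)) eqn:E1; destruct (Nat.leb (g K) n) eqn:E2.
    + apply Nat.ltb_lt in E1; apply Nat.leb_le in E2; lia.
    + apply vadd_0.
    + rewrite plus_INR. replace (RtoC (INR 1 + INR (count_le g n K)))
        with (Cadd C1 (RtoC (INR (count_le g n K)))) by cx_ring.
      rewrite vscal_addl, vscal_1; reflexivity.
    + apply Nat.ltb_ge in E1; apply Nat.leb_gt in E2; lia.
Qed.

End TailSeries.

Theorem proposition1p7
  (Aset : cseq -> Prop) (Anorm : cseq -> R)
  (X : NormedSpace) (act : cseq -> X -> X)
  (Y : NormedSpace) (actY : cseq -> Y -> Y) (j : X -> Y) :
  is_seq_algebra Aset Anorm ->
  is_module Aset Anorm X act ->
  is_essential Aset X act ->
  is_homogeneous X act ->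
  is_module_completion Aset Anorm X act Y actY j ->
  forall x : Y, exists (xb : Y) (lam : nat -> R),
    (forall n, 1 <= lam n) /\ cv_infty lam /\
    (forall n, actY (pseq n) xb = vscal (RtoC (lam n)) (actY (pseq n) x)).
Proof.
  intros HA HM HE HH HC x.
  pose proof (completion_module HC) as HMY.
  destruct (tail_modulus actY x (fun k => (1/2)^k)
              (completion_tails_vanish HA HM HH HC HE x) (fun k => pow_lt (1/2) k ltac:(lra)))
    as [f Hf].
  set (g := incr_majorant f).
  set (T := fun k => tail_part actY (g k) x).
  assert (HT : forall k, (1 <= k)%nat -> vnorm (T k) < (1/2)^k).
  { intros [|k] Hk; [lia|]. apply Hf, incr_majorant_ge. }
  destruct HC as (Hcomplete & _).
  destruct (Hcomplete (partial_sum T) (partial_sum_cauchy Y T HT)) as [xb Hxb].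
  exists xb, (fun n => INR (count_le g n (S n))). split; [|split].
  - intros n. apply (le_INR 1), count_le_ge_1. reflexivity.
  - apply count_le_diverges; [apply incr_majorant_mono | apply incr_majorant_ge_id].
  - intros n. apply (coord_of_limit HA HMY (partial_sum T) xb n (S n) _ Hxb).
    intros K HK. unfold T.
    rewrite (coord_partial_sum_tails HA HMY), (count_le_stable g n K) by
      (apply incr_majorant_ge_id || exact HK).
    reflexivity.
Qed.
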